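(* For every $1\le t\le m$ there exists a deterministic voting rule taking top-$t$ preference profiles as input that has metric distortion $O(m-t+1)$ and utilitarian distortion $O(m^2)$.
   Context: Setting: $n$ agents, $m$ alternatives; each agent has an underlying strict ranking, but the rule only receives each agent's ordered list of her top $t$ alternatives (a top-$t$ profile $\vec\sigma_t$). A full profile extends $\vec\sigma_t$ if each agent's top-$t$ prefix coincides with that in $\vec\sigma_t$. Metric framework: a pseudometric $d$ on agents and alternatives is consistent with a full profile $\vec\sigma$ if $X\succ_iY\Rightarrow d(i,X)\le d(i,Y)$, and consistent with $\vec\sigma_t$ if it is consistent with some full profile extending $\vec\sigma_t$. $\mathrm{SC}(X,d)=\sum_id(i,X)$. Metric distortion of a (top-$t$) rule $f$: $\sup_{\vec\sigma_t}\sup_{d}\mathbb E_{X\sim f(\vec\sigma_t)}[\mathrm{SC}(X,d)]/\min_X\mathrm{SC}(X,d)$ over consistent $d$. Utilitarian framework: unit-sum nonnegative utilities $u_i$ ($\sum_Xu_i(X)=1$), consistent with a full profile if $X\succ_iY\Rightarrow u_i(X)\ge u_i(Y)$ and with $\vec\sigma_t$ if consistent with some full extension. $\mathrm{SW}(X,\vec u)=\sum_iu_i(X)$. Utilitarian distortion: $\sup_{\vec\sigma_t}\sup_{\vec u}\max_X\mathrm{SW}(X,\vec u)/\mathbb E_{X\sim f(\vec\sigma_t)}[\mathrm{SW}(X,\vec u)]$. *)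

From HB Require Import structures.
From mathcomp Require Import all_boot all_order all_algebra all_fingroup.
From mathcomp Require Import reals.
Set Implicit Arguments. Unset Strict Implicit. Unset Printing Implicit Defensive.
Import Order.TTheory GRing.Theory Num.Theory.
Local Open Scope ring_scope.

(* Agents are 'I_n, alternatives are 'I_m.
   A top-t profile: st : 'I_n -> 'I_t -> 'I_m, st i k = alternative agent i ranks at
   position k (0 = top); each st i must be injective.
   A full profile is given by rank functions: rank i : {perm 'I_m}, rank i X = position
   of X in agent i's ranking (0 = top). *)

Definition prefers (n m : nat) (rank : 'I_n -> {perm 'I_m}) (i : 'I_n) (X Y : 'I_m) : Prop :=
  (rank i X < rank i Y)%N.

Definition extends (n m t : nat) (rank : 'I_n -> {perm 'I_m}) (st : 'I_n -> 'I_t -> 'I_m) : Prop :=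
  forall (i : 'I_n) (k : 'I_t), nat_of_ord (rank i (st i k)) = nat_of_ord k.

Definition is_pseudometric (R : realType) (T : Type) (d : T -> T -> R) : Prop :=
  (forall x, d x x = 0) /\ (forall x y, 0 <= d x y) /\ (forall x y, d x y = d y x) /\
  (forall x y z, d x z <= d x y + d y z).

Definition metric_consistent_full (R : realType) (n m : nat)
  (d : 'I_n + 'I_m -> 'I_n + 'I_m -> R) (rank : 'I_n -> {perm 'I_m}) : Prop :=
  forall i X Y, prefers rank i X Y -> d (inl i) (inr X) <= d (inl i) (inr Y).

Definition metric_consistent (R : realType) (n m t : nat)
  (d : 'I_n + 'I_m -> 'I_n + 'I_m -> R) (st : 'I_n -> 'I_t -> 'I_m) : Prop :=
  exists rank, extends rank st /\ metric_consistent_full d rank.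

Definition SC (R : realType) (n m : nat) (d : 'I_n + 'I_m -> 'I_n + 'I_m -> R) (X : 'I_m) : R :=
  \sum_(i < n) d (inl i) (inr X).

Definition unit_sum (R : realType) (n m : nat) (u : 'I_n -> 'I_m -> R) : Prop :=
  forall i, (forall X, 0 <= u i X) /\ \sum_(X < m) u i X = 1.

Definition util_consistent_full (R : realType) (n m : nat)
  (u : 'I_n -> 'I_m -> R) (rank : 'I_n -> {perm 'I_m}) : Prop :=
  forall i X Y, prefers rank i X Y -> u i Y <= u i X.

Definition util_consistent (R : realType) (n m t : nat)
  (u : 'I_n -> 'I_m -> R) (st : 'I_n -> 'I_t -> 'I_m) : Prop :=
  exists rank, extends rank st /\ util_consistent_full u rank.

Definition SW (R : realType) (n m : nat) (u : 'I_n -> 'I_m -> R) (X : 'I_m) : R :=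
  \sum_(i < n) u i X.

From HB Require Import structures.
From mathcomp Require Import all_boot all_order all_algebra all_fingroup.
From mathcomp Require Import reals.
From mathcomp Require Import zify ring lra.
Set Implicit Arguments. Unset Strict Implicit. Unset Printing Implicit Defensive.
Import Order.TTheory GRing.Theory Num.Theory.

(* Put k = m - t + 1.  An alternative is a candidate when at least n/(2m)
   agents rank it first and at least n/(8k) agents list it among their top t.
   Agent i is known to prefer W to X when W is on her list above every
   occurrence of X; W defeats X when at least as many agents are known to
   prefer W to X as the converse.  The rule returns a Copeland winner of the
   defeat tournament restricted to candidates.

   Section TopProfile is pure counting: more than a quarter of the agents have
   a candidate as top choice (so Copeland winners exist), a Copeland winner
   reaches every candidate in at most two defeats (king property), and a
   defeat inflicted by a candidate is supported by at least n/(16k) agents.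
   Section Metric turns this into distances: every alternative X is
   9-approximated by a candidate Z (the top choice of a well-placed agent),
   and the two defeats leading from the winner to Z cost O(k) SC(Z).
   Section Utility only uses that the winner is the top choice of n/(2m)
   agents, each of whom gives it utility at least 1/m. *)

Lemma card_set_sum_bool (T : finType) (P : pred T) :
  #|[set x | P x]| = (\sum_x (P x : nat))%N.
Proof. by rewrite -sum1dep_card big_mkcond /=; apply: eq_bigr => x _; case: (P x). Qed.

Section TopProfile.
Variables (m t n : nat) (st : 'I_n -> 'I_t.+1 -> 'I_m).

Definition listed i X := [exists a, st i a == X].
(* W is on i's list at a position preceding every position of X, so i
   prefers W to X in every full ranking extending her list *)
Definition known_pref i W X :=
  [exists a, (st i a == W) && [forall b, (st i b == X) ==> (a < b)%N]].
Definition npref W X := #|[set i | known_pref i W X]|.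
Definition nlisted X := #|[set i | listed i X]|.
Definition top i := st i ord0.
Definition nplural X := #|[set i | top i == X]|.
(* kappa is the k = m - t + 1 of the statement, the lists having length t.+1 *)
Definition kappa := (m - t.+1 + 1)%N.
Definition plurality_heavy X := (n <= 2 * m * nplural X)%N.
Definition list_heavy X := (n <= 8 * kappa * nlisted X)%N.
Definition candidate X := plurality_heavy X && list_heavy X.
Definition defeats W X := (npref X W <= npref W X)%N.
Definition copeland W := #|[set X | candidate X && defeats W X]|.
Definition copeland_winner W :=
  candidate W && [forall X, candidate X ==> (copeland X <= copeland W)%N].

Hypothesis st_inj : forall i, injective (st i).

Lemma known_pref_total i W Z : listed i W -> W != Z -> known_pref i W Z || known_pref i Z W.
Proof.
case/existsP=> a /eqP Ha nWZ.
case: (boolP [exists b, st i b == Z]) => [/existsP [b /eqP Hb]|nZ]; last first.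
  apply/orP; left; apply/existsP; exists a; rewrite Ha eqxx /=.
  by apply/forallP=> c; apply/implyP=> Hc; case/negP: nZ; apply/existsP; exists c.
have nab : a != b by apply/eqP=> e; move: nWZ; rewrite -Ha -Hb e eqxx.
case: (ltngtP a b) => [lab|lba|eab]; last by move: nab; rewrite (val_inj eab) eqxx.
- apply/orP; left; apply/existsP; exists a; rewrite Ha eqxx /=.
  by apply/forallP=> c; apply/implyP=> /eqP; rewrite -Hb => /st_inj ->.
- apply/orP; right; apply/existsP; exists b; rewrite Hb eqxx /=.
  by apply/forallP=> c; apply/implyP=> /eqP; rewrite -Ha => /st_inj ->.
Qed.

(* every agent listing W takes a side in the contest W versus Z *)
Lemma nlisted_le_npref W Z : W != Z -> (nlisted W <= npref W Z + npref Z W)%N.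
Proof.
move=> nWZ; apply: leq_trans (leq_card_setU _ _) .
apply: subset_leq_card; apply/subsetP=> i; rewrite !inE => Hl.
exact: known_pref_total Hl nWZ.
Qed.

Lemma card_listed i : #|[set X | listed i X]| = t.+1.
Proof.
have -> : [set X | listed i X] = st i @: setT.
  by apply/setP=> X; rewrite inE; apply/existsP/imsetP => [[a /eqP <-]|[a _ ->]];
    exists a.
by rewrite card_imset // cardsT card_ord.
Qed.

Lemma sum_nlisted : (\sum_X nlisted X = n * t.+1)%N.
Proof.
rewrite /nlisted; under eq_bigr do rewrite card_set_sum_bool.
rewrite exchange_big /=.
under eq_bigr => i _ do rewrite -card_set_sum_bool card_listed.
by rewrite sum_nat_const card_ord.
Qed.

Lemma card_top_in (P : pred 'I_m) : #|[set i | P (top i)]| = (\sum_(X | P X) nplural X)%N.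
Proof.
rewrite /nplural; under [in RHS]eq_bigr do rewrite card_set_sum_bool.
rewrite card_set_sum_bool exchange_big /=; apply: eq_bigr=> i _.
rewrite big_mkcond (bigD1 (top i)) //= eqxx big1 ?addn0; first by case: (P _).
by move=> X /negbTE H; rewrite eq_sym H; case: (P X).
Qed.

Lemma nplural_le_nlisted X : (nplural X <= nlisted X)%N.
Proof.
apply: subset_leq_card; apply/subsetP=> i; rewrite !inE => /eqP <-.
by apply/existsP; exists ord0.
Qed.

Lemma nlisted_le_n X : (nlisted X <= n)%N.
Proof. by rewrite -[leqRHS](card_ord n) max_card. Qed.

Hypothesis tm : (t < m)%N.

Lemma plurality_light_mass :
  (0 < n)%N -> (2 * \sum_(X | ~~ plurality_heavy X) nplural X <= n - 1)%N.
Proof.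
move=> n0; have m0 : (0 < m)%N by apply: leq_ltn_trans tm.
rewrite -(leq_pmul2l m0) mulnA big_distrr /=.
apply: (@leq_trans (\sum_(X | ~~ plurality_heavy X) (n - 1))%N).
  by apply: leq_sum=> X; rewrite /plurality_heavy -ltnNge; lia.
rewrite sum_nat_cond_const leq_mul2r; apply/orP; right.
by rewrite -[leqRHS](card_ord m) max_card.
Qed.

Lemma list_light_weight :
  (8 * kappa * \sum_(X | ~~ list_heavy X) nlisted X
     <= #|[set X | ~~ list_heavy X]| * (n - 1))%N.
Proof.
rewrite big_distrr -sum_nat_cond_const /=.
by apply: leq_sum => X; rewrite /list_heavy -ltnNge; lia.
Qed.

(* list-heavy alternatives absorb at most n list positions each *)
Lemma list_heavy_cover :
  (n * t.+1 <= #|[set X | list_heavy X]| * n + \sum_(X | ~~ list_heavy X) nlisted X)%N.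
Proof.
rewrite -sum_nlisted (bigID list_heavy) /= leq_add2r -sum_nat_cond_const.
by apply: leq_sum => X _; apply: nlisted_le_n.
Qed.

(* list-light alternatives carry L < n/8 list positions in total: by the
   cover bound there are at most kappa - 1 + L/n of them *)
Lemma list_light_mass :
  (0 < n)%N -> (8 * \sum_(X | ~~ list_heavy X) nlisted X < n)%N.
Proof.
move=> n0; have := list_light_weight; have := list_heavy_cover; rewrite /kappa.
set L := (\sum_(X | _) _)%N.
have hc : (#|[set X | list_heavy X]| + #|[set X | ~~ list_heavy X]| = m)%N.
  rewrite -[RHS](card_ord m) -(cardsC [set X | list_heavy X]); congr (_ + _).
  by apply: eq_card => X; rewrite !inE.
move: hc; set heavy := #|_|; set c := #|_| => hc cover light.
have hcn : (c * n <= (m - t.+1) * n + L)%N by nia.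
nia.
Qed.

Lemma candidate_top_mass : (0 < n)%N -> (n < 4 * #|[set i | candidate (top i)]|)%N.
Proof.
move=> n0.
have split_n : (#|[set i | candidate (top i)]| + #|[set i | ~~ candidate (top i)]| = n)%N.
  rewrite -[RHS](card_ord n) -(cardsC [set i | candidate (top i)]); congr (_ + _).
  by apply: eq_card => i; rewrite !inE.
have bad_tops : (#|[set i | ~~ candidate (top i)]| <=
    \sum_(X | ~~ plurality_heavy X) nplural X + \sum_(X | ~~ list_heavy X) nlisted X)%N.
  apply: (@leq_trans (\sum_(X | ~~ plurality_heavy X) nplural X
                      + \sum_(X | ~~ list_heavy X) nplural X)); last first.
    by rewrite leq_add2l; apply: leq_sum => X _; apply: nplural_le_nlisted.
  rewrite -(card_top_in (fun X => ~~ plurality_heavy X)).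
  rewrite -(card_top_in (fun X => ~~ list_heavy X)).
  rewrite !card_set_sum_bool -big_split /=; apply: leq_sum => i _.
  by rewrite /candidate; case: (plurality_heavy _); case: (list_heavy _).
have := plurality_light_mass n0; have := list_light_mass n0.
lia.
Qed.

Lemma exists_candidate : (0 < n)%N -> exists W, candidate W.
Proof.
move=> /candidate_top_mass.
case: (set_0Vmem [set i | candidate (top i)]) => [->|[i]]; first by rewrite cards0.
by rewrite inE => ci _; exists (top i).
Qed.

Lemma exists_copeland_winner : (0 < n)%N -> exists W, copeland_winner W.
Proof.
case/exists_candidate => W0 cW0.
case: (arg_maxnP copeland cW0) => W cW maxW; exists W.
by rewrite /copeland_winner cW; apply/forallP => X; apply/implyP => /maxW.
Qed.

Lemma defeats_total W Z : ~~ defeats W Z -> defeats Z W.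
Proof. by rewrite /defeats -ltnNge => /ltnW. Qed.

(* king property: a Copeland winner W that does not defeat a candidate Z
   defeats some candidate that defeats Z, else Z would have a larger score *)
Lemma copeland_winner_king W Z : copeland_winner W -> candidate Z ->
  defeats W Z \/ exists Y, [/\ candidate Y, defeats W Y & defeats Y Z].
Proof.
case/andP=> cW /forallP maxW cZ.
case: (boolP (defeats W Z)) => [|nWZ]; [by left | right].
case: (boolP [exists Y, [&& candidate Y, defeats W Y & defeats Y Z]]).
  by case/existsP => Y /and3P [cY dWY dYZ]; exists Y.
rewrite negb_exists => /forallP noY; exfalso.
have := maxW Z; rewrite cZ /= leqNgt => /negP; apply.
apply: proper_card; apply/properP; split.
  apply/subsetP=> X; rewrite !inE => /andP [cX dWX]; rewrite cX /=.
  by apply: defeats_total; have := noY X; rewrite cX dWX.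
by exists Z; rewrite !inE ?cZ /defeats ?leqnn // negb_and nWZ orbT.
Qed.

Lemma defeat_support W Z : candidate W -> W != Z -> defeats W Z ->
  (n <= 16 * kappa * npref W Z)%N.
Proof.
case/andP=> _; rewrite /list_heavy /defeats => heavy nWZ dWZ.
have := nlisted_le_npref nWZ; nia.
Qed.

Lemma known_pref_prefers rank i W X :
  extends rank st -> known_pref i W X -> prefers rank i W X.
Proof.
move=> ext /existsP [a /andP [/eqP Ha /forallP Hb]]; rewrite /prefers -Ha ext.
case: (ltnP (rank i X) t.+1) => [lt|ge]; last by apply: leq_trans ge.
have e : rank i (st i (Ordinal lt)) = rank i X by apply: val_inj; rewrite /= ext.
by have := Hb (Ordinal lt); rewrite (perm_inj e) eqxx.
Qed.

Lemma top_prefers rank i X : extends rank st -> X != top i -> prefers rank i (top i) X.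
Proof.
move=> ext nX; rewrite /prefers /top ext /= lt0n.
apply: contra nX => /eqP H; apply/eqP.
by apply: (@perm_inj _ (rank i)); apply: val_inj; rewrite /= H ext.
Qed.

End TopProfile.

(* the rule: a Copeland winner among candidates *)
Definition voting_rule (m t : nat) (x0 : 'I_m) (n : nat) (st : 'I_n -> 'I_t.+1 -> 'I_m) :=
  odflt x0 [pick W | copeland_winner st W].

Lemma voting_rule_winner m t (x0 : 'I_m) n (st : 'I_n -> 'I_t.+1 -> 'I_m) :
  (forall i, injective (st i)) -> (t < m)%N -> (0 < n)%N ->
  copeland_winner st (voting_rule x0 st).
Proof.
move=> st_inj tm n0; rewrite /voting_rule; case: pickP => [W //|none].
by case: (exists_copeland_winner st_inj tm n0) => W; rewrite none.
Qed.

Local Open Scope ring_scope.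

Lemma exists_below_average (R : realDomainType) (I : finType) (T : {set I}) (F : I -> R) :
  T != set0 -> exists2 i, i \in T & #|T|%:R * F i <= \sum_(j in T) F j.
Proof.
case/set0Pn => i0 i0T; case: (arg_minP F i0T) => i iT mini; exists i => //.
by rewrite mulr_natl -sumr_const; apply: ler_sum => j /mini.
Qed.

Lemma scaled_bound (R : realDomainType) (s N a x S y : R) :
  0 <= N -> 0 <= a -> 0 <= S -> N <= a * s ->
  s * x <= S + s * y -> N * x <= a * S + N * y.
Proof.
move=> N0 a0 S0 Nas sxy; have aS0 : 0 <= a * S by apply: mulr_ge0.
case: (lerP x y) => [xy|yx]; first by have := ler_wpM2l N0 xy; lra.
have xy0 : 0 <= x - y by lra.
have gap : s * (x - y) <= S by lra.
have := ler_wpM2r xy0 Nas; have := ler_wpM2l a0 gap; lra.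
Qed.

Section Metric.
Variables (R : realType) (m t n : nat) (st : 'I_n -> 'I_t.+1 -> 'I_m).
Hypotheses (st_inj : forall i, injective (st i)) (tm : (t < m)%N).
Variable d : 'I_n + 'I_m -> 'I_n + 'I_m -> R.
Hypothesis d_metric : is_pseudometric d.
Variable rank : 'I_n -> {perm 'I_m}.
Hypotheses (ext : extends rank st) (d_cons : metric_consistent_full d rank).

Let D i X := d (inl i) (inr X).
Let E X Y := d (inr X) (inr Y).

Lemma D_ge0 i X : 0 <= D i X.
Proof. by case: d_metric => _ [h _]; apply: h. Qed.
Lemma E_ge0 X Y : 0 <= E X Y.
Proof. by case: d_metric => _ [h _]; apply: h. Qed.
Lemma E_sym X Y : E X Y = E Y X.
Proof. by case: d_metric => _ [_ [h _]]; rewrite /E h. Qed.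
Lemma E_xx X : E X X = 0.
Proof. by case: d_metric => h _; rewrite /E h. Qed.
Lemma E_tri X Y Z : E X Z <= E X Y + E Y Z.
Proof. by case: d_metric => _ [_ [_ h]]; apply: h. Qed.
Lemma E_le_via_agent i X Y : E X Y <= D i X + D i Y.
Proof.
case: d_metric => _ [_ [hs h]]; rewrite /E /D.
by apply: le_trans (h _ (inl i) _) _; rewrite (hs (inr X)).
Qed.
Lemma D_tri i X Y : D i X <= D i Y + E Y X.
Proof. by case: d_metric => _ [_ [_ h]]; apply: h. Qed.

Lemma SC_ge0 X : 0 <= SC d X.
Proof. by apply: sumr_ge0 => i _; apply: D_ge0. Qed.

(* moving the outcome from Y to X costs every agent at most E Y X *)
Lemma SC_shift X Y : SC d X <= SC d Y + n%:R * E Y X.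
Proof.
rewrite /SC mulr_natl -[X in _ *+ X](card_ord n) -sumr_const -big_split /=.
by apply: ler_sum => i _; apply: D_tri.
Qed.

Lemma partial_SC_le (T : {set 'I_n}) X : \sum_(i in T) D i X <= SC d X.
Proof.
rewrite /SC [X in _ <= X](bigID (mem T)) /= lerDl.
by apply: sumr_ge0 => i _; apply: D_ge0.
Qed.

(* each agent of T is at least as close to W as to Y; a triangle inequality
   through each of them and through any alternative V bounds E W Y *)
Lemma preferring_group_bound (T : {set 'I_n}) W Y V :
  (forall i, i \in T -> D i W <= D i Y) ->
  #|T|%:R * E W Y <= 2 * SC d V + #|T|%:R * (2 * E Y V).
Proof.
move=> closer; apply: (@le_trans _ _ (\sum_(i in T) (2 * D i V + 2 * E Y V))).
  rewrite mulr_natl -sumr_const; apply: ler_sum => i iT.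
  have := E_le_via_agent i W Y; have := closer i iT; have := D_tri i Y V.
  rewrite (E_sym V Y); lra.
rewrite big_split /= -mulr_sumr sumr_const -mulr_natl.
by have := partial_SC_le T V; lra.
Qed.

Lemma preferring_group_scaled (T : {set 'I_n}) W Y V (a : nat) :
  (forall i, i \in T -> D i W <= D i Y) -> (n <= a * #|T|)%N ->
  n%:R * E W Y <= 2 * a%:R * SC d V + 2 * n%:R * E Y V.
Proof.
move=> closer big; have := preferring_group_bound V closer.
have hn : (n%:R : R) <= a%:R * #|T|%:R by rewrite -natrM ler_nat.
have S0 : 0 <= 2 * SC d V by have := SC_ge0 V; lra.
move/(scaled_bound (ler0n _ _) (ler0n _ _) S0 hn); lra.
Qed.

(* a defeat W -> Y by a candidate W is backed by n/(16 kappa) agents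
   preferring W, which bounds the distance from W to Y *)
Lemma defeat_distance W Y V : candidate st W -> defeats st W Y ->
  n%:R * E W Y <= (32 * kappa m t)%:R * SC d V + 2 * n%:R * E Y V.
Proof.
move=> cW dWY; case: (eqVneq W Y) => [<-|nWY].
  by rewrite E_xx mulr0 addr_ge0 ?mulr_ge0 ?SC_ge0 ?E_ge0.
have -> : (32 * kappa m t)%:R = 2 * (16 * kappa m t)%:R :> R by rewrite -natrM mulnA.
apply: (preferring_group_scaled (T := [set i | known_pref st i W Y])).
  by move=> i; rewrite inE => kp; apply: d_cons; apply: known_pref_prefers.
exact: defeat_support.
Qed.

(* an agent with a candidate top choice and at most average distance to X
   (average over the > n/4 such agents) yields a candidate Z near X *)
Lemma candidate_near X : (0 < n)%N -> exists2 Z, candidate st Z & SC d Z <= 9 * SC d X.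
Proof.
move=> n0; have mass := candidate_top_mass st_inj tm n0.
set T := [set i | candidate st (top st i)] in mass.
have T0 : T != set0 by apply: contraTneq mass => ->; rewrite cards0.
case: (exists_below_average (fun i => D i X) T0) => i iT avg_i.
exists (top st i); first by move: iT; rewrite inE.
have top_close : D i (top st i) <= D i X.
  case: (eqVneq X (top st i)) => [->|ne]; first by [].
  by apply: d_cons; apply: top_prefers.
have through_i := E_le_via_agent i (top st i) X.
have shift := SC_shift (top st i) X; rewrite E_sym in shift.
have T_cost := partial_SC_le T X.
have n_le_4T : (n%:R : R) <= 4 * #|T|%:R by rewrite -natrM ler_nat ltnW.
have shift_cost : n%:R * E (top st i) X <= n%:R * (2 * D i X).
  by apply: ler_wpM2l => //; lra.
have i_cost : n%:R * D i X <= 4 * #|T|%:R * D i X.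
  by apply: ler_wpM2r => //; apply: D_ge0.
lra.
Qed.

(* the king property of Copeland winners: two defeats lead from W to Z *)
Lemma winner_distance W Z : copeland_winner st W -> candidate st Z ->
  n%:R * E W Z <= 4 * (32 * kappa m t)%:R * SC d Z.
Proof.
move=> wW cZ; have cW : candidate st W by case/andP: wW.
have cost_ge0 : 0 <= (32 * kappa m t)%:R * SC d Z by rewrite mulr_ge0 ?SC_ge0.
case: (copeland_winner_king wW cZ) => [dWZ|[Y [cY dWY dYZ]]].
  by have := defeat_distance Z cW dWZ; rewrite E_xx mulr0; lra.
have WY := defeat_distance Z cW dWY; have YZ := defeat_distance Z cY dYZ.
rewrite E_xx mulr0 in YZ.
have : n%:R * E W Z <= n%:R * (E W Y + E Y Z) by apply: ler_wpM2l => //; apply: E_tri.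
lra.
Qed.

(* the winner costs at most (1 + 128 k) SC(Z) <= 1161 k SC(X) *)
Lemma metric_distortion W X : (0 < n)%N -> copeland_winner st W ->
  SC d W <= (1161 * kappa m t)%:R * SC d X.
Proof.
move=> n0 wW; case: (candidate_near X n0) => Z cZ hZ.
have := winner_distance wW cZ; have := SC_shift W Z; rewrite E_sym.
rewrite !natrM; set k := (kappa m t)%:R.
have k1 : 1 <= k by rewrite ler1n /kappa addn1.
have sX := SC_ge0 X.
have : 0 <= (1 + 128 * k) * (9 * SC d X - SC d Z) by rewrite mulr_ge0 //; lra.
have : 0 <= (k - 1) * SC d X by rewrite mulr_ge0 //; lra.
nra.
Qed.

End Metric.

Section Utility.
Variables (R : realType) (m t n : nat) (st : 'I_n -> 'I_t.+1 -> 'I_m).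
Variable u : 'I_n -> 'I_m -> R.
Hypothesis u_unit : unit_sum u.
Variable rank : 'I_n -> {perm 'I_m}.
Hypotheses (ext : extends rank st) (u_cons : util_consistent_full u rank).

Lemma u_le1 i X : u i X <= 1.
Proof.
case: (u_unit i) => u0 usum; rewrite -usum (bigD1 X) //= lerDl.
by apply: sumr_ge0 => Y _; apply: u0.
Qed.

Lemma SW_le_n X : SW u X <= n%:R.
Proof.
rewrite /SW; apply: le_trans (ler_sum _ (fun i _ => u_le1 i X)) _.
by rewrite sumr_const card_ord.
Qed.

(* the top choice carries the largest of m utilities summing to one *)
Lemma top_utility i : 1 <= m%:R * u i (top st i).
Proof.
case: (u_unit i) => u0 usum; rewrite -[X in X <= _]usum.
have top_max X : u i X <= u i (top st i).
  case: (eqVneq X (top st i)) => [->|ne]; first by [].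
  by apply: u_cons; apply: top_prefers.
apply: le_trans (ler_sum _ (fun X _ => top_max X)) _.
by rewrite sumr_const card_ord mulr_natl.
Qed.

Lemma nplural_le_SW W : (nplural st W)%:R <= m%:R * SW u W.
Proof.
rewrite /nplural card_set_sum_bool natr_sum /SW mulr_sumr; apply: ler_sum => i _.
case: eqP => [<-|_]; first exact: top_utility.
by rewrite mulr_ge0 //; case: (u_unit i) => u0 _; apply: u0.
Qed.

(* a candidate W has SW(W) >= nplural W / m >= n / (2 m^2) >= SW(X) / (2 m^2) *)
Lemma utility_distortion W X : candidate st W -> SW u X <= (2 * m ^ 2)%:R * SW u W.
Proof.
case/andP => heavy _; move: heavy; rewrite /plurality_heavy -(ler_nat R) !natrM => heavy.
apply: le_trans (SW_le_n X) (le_trans heavy _).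
have two_m_ge0 : (0 : R) <= 2 * m%:R by rewrite mulr_ge0.
have := ler_wpM2l two_m_ge0 (nplural_le_SW W); lra.
Qed.

End Utility.

Theorem mainTheorem9 :
  exists C1 C2 : nat,
  forall m t : nat, (1 <= t <= m)%N ->
  exists f : forall n : nat, ('I_n -> 'I_t -> 'I_m) -> 'I_m,
  forall (R : realType) (n : nat) (st : 'I_n -> 'I_t -> 'I_m),
    (forall i, injective (st i)) ->
    (forall d : 'I_n + 'I_m -> 'I_n + 'I_m -> R,
       is_pseudometric d -> metric_consistent d st ->
       forall X : 'I_m, SC d (f n st) <= (C1 * (m - t + 1))%:R * SC d X) /\
    (forall u : 'I_n -> 'I_m -> R,
       unit_sum u -> util_consistent u st ->
       forall X : 'I_m, SW u X <= (C2 * m ^ 2)%:R * SW u (f n st)).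
Proof.
exists 1161%N, 2%N => m [//|t] /andP [_ tm].
have m0 : (0 < m)%N by apply: leq_ltn_trans tm.
exists (fun n st => voting_rule (Ordinal m0) st) => R n st st_inj.
case: (posnP n) => [n0|n0].
  by subst n; split => [d _ _ X|u _ _ X]; rewrite /SC /SW !big_ord0 mulr0.
have winner := voting_rule_winner (Ordinal m0) st_inj tm n0.
split => [d d_metric [rank [ext d_cons]] X|u u_unit [rank [ext u_cons]] X].
  exact: metric_distortion.
by apply: utility_distortion => //; case/andP: winner.
Qed.
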